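(* Let $X$ be a Banach lattice and $E_1,E_2\colon X\to\mathbb R\cup\{+\infty\}$ two proper convex functions such that $E_1\ll_{\mathrm P}E_2$. Then $E_2^*\ll_{\mathrm Q}E_1^*$. In particular, if $E\colon X\to\mathbb R\cup\{+\infty\}$ is a submodular proper convex function, then $E^*$ is substitutable.
   Context: A Banach lattice is a Banach space with a lattice partial order (inf/sup $\wedge,\vee$) compatible with addition and nonnegative scaling and with $|\phi_1|\leq|\phi_2|\Rightarrow\|\phi_1\|\leq\|\phi_2\|$ ($\phi^+=\phi\vee0$, $\phi^-=-(\phi\wedge0)$, $|\phi|=\phi^++\phi^-$). $X^*$ carries the dual order ($\mu\leq\nu$ iff $\langle\mu,\phi\rangle\leq\langle\nu,\phi\rangle$ for all $\phi\geq0$), making it a Banach lattice; $[a,b]=\{m:a\leq m\leq b\}$. $E^*(\mu)=\sup_{\phi\in X}\langle\mu,\phi\rangle-E(\phi)$. $E_1\ll_{\mathrm P}E_2$ means $E_1(\phi_1\wedge\phi_2)+E_2(\phi_1\vee\phi_2)\leq E_1(\phi_1)+E_2(\phi_2)$ for all $\phi_1,\phi_2$; $E$ is submodular if $E\ll_{\mathrm P}E$. For $F_1,F_2\colon X^*\to\mathbb R\cup\{+\infty\}$, $F_2\ll_{\mathrm Q}F_1$ means: for all $\mu_1,\mu_2\in X^*$ and every $t_{21}\in[0,(\mu_2-\mu_1)^+]$ there exists $t_{12}\in[0,(\mu_1-\mu_2)^+]$ with $F_1(\mu_1+t_{21}-t_{12})+F_2(\mu_2-t_{21}+t_{12})\leq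 F_1(\mu_1)+F_2(\mu_2)$; $F$ is substitutable if $F\ll_{\mathrm Q}F$. *)

From mathcomp Require Import all_boot all_order all_algebra.
From mathcomp Require Import all_classical all_reals all_analysis.
Set Implicit Arguments. Unset Strict Implicit. Unset Printing Implicit Defensive.
Import Order.TTheory GRing.Theory Num.Theory.
Import numFieldNormedType.Exports.
Local Open Scope classical_set_scope.
Local Open Scope ring_scope.

Section BanachLattice.
Variables (R : realType) (V : completeNormedModType R).
Variables (le : V -> V -> Prop) (meet join : V -> V -> V).

Definition lat_abs (x : V) : V := join x 0 + - meet x 0.

Record is_banach_lattice : Prop := {
  bl_refl : forall x, le x x;
  bl_antisym : forall x y, le x y -> le y x -> x = y;
  bl_trans : forall x y z, le x y -> le y z -> le x z;
  bl_meet_l : forall x y, le (meet x y) x;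
  bl_meet_r : forall x y, le (meet x y) y;
  bl_meet_glb : forall x y z, le z x -> le z y -> le z (meet x y);
  bl_join_l : forall x y, le x (join x y);
  bl_join_r : forall x y, le y (join x y);
  bl_join_lub : forall x y z, le x z -> le y z -> le (join x y) z;
  bl_add : forall x y z, le x y -> le (x + z) (y + z);
  bl_scale : forall (t : R) x y, 0 <= t -> le x y -> le (t *: x) (t *: y);
  bl_norm : forall x y, le (lat_abs x) (lat_abs y) -> `|x| <= `|y|
}.

Definition is_dual (mu : V -> R) : Prop :=
  (forall (a : R) (x y : V), mu (a *: x + y) = a * mu x + mu y) /\
  continuous mu.

Definition dual_le (mu nu : V -> R) : Prop :=
  forall phi, le 0 phi -> mu phi <= nu phi.

Definition dual_is_sup (p a b : V -> R) : Prop :=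
  is_dual p /\ dual_le a p /\ dual_le b p /\
  forall q, is_dual q -> dual_le a q -> dual_le b q -> dual_le p q.

Definition dual_pos_part (p mu : V -> R) : Prop :=
  dual_is_sup p mu (fun _ => 0).

Definition dual_in_interval (m a b : V -> R) : Prop :=
  is_dual m /\ dual_le a m /\ dual_le m b.

Local Open Scope ereal_scope.

Definition proper_fun (E : V -> \bar R) : Prop :=
  (forall x, E x <> -oo) /\ (exists x, E x <> +oo).

Definition convex_fun (E : V -> \bar R) : Prop :=
  forall (x y : V) (t : R), (0 < t < 1)%R ->
    E (t *: x + (1 - t) *: y)%R <= t%:E * E x + (1 - t)%:E * E y.

Definition conjugate (E : V -> \bar R) (mu : V -> R) : \bar R :=
  ereal_sup [set (mu phi)%:E - E phi | phi in [set: V]].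

Definition lessP (E1 E2 : V -> \bar R) : Prop :=
  forall phi1 phi2 : V,
    E1 (meet phi1 phi2) + E2 (join phi1 phi2) <= E1 phi1 + E2 phi2.

Definition submodular (E : V -> \bar R) : Prop := lessP E E.

Definition lessQ (F2 F1 : (V -> R) -> \bar R) : Prop :=
  forall mu1 mu2 : V -> R, is_dual mu1 -> is_dual mu2 ->
  forall p21, dual_pos_part p21 (fun x => mu2 x - mu1 x)%R ->
  forall t21, dual_in_interval t21 (fun _ => 0%R) p21 ->
  exists p12 t12,
    dual_pos_part p12 (fun x => mu1 x - mu2 x)%R /\
    dual_in_interval t12 (fun _ => 0%R) p12 /\
    F1 (fun x => mu1 x + t21 x - t12 x)%R + F2 (fun x => mu2 x - t21 x + t12 x)%R
      <= F1 mu1 + F2 mu2.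

Definition substitutable (F : (V -> R) -> \bar R) : Prop := lessQ F F.

End BanachLattice.

From HB Require Import structures.
From mathcomp Require Import all_boot all_order all_algebra.
From mathcomp Require Import all_classical all_reals all_analysis.
From mathcomp Require Import lra ring.
Set Implicit Arguments. Unset Strict Implicit. Unset Printing Implicit Defensive.
Import Order.TTheory GRing.Theory Num.Theory.
Import numFieldNormedType.Exports.
Local Open Scope classical_set_scope.
Local Open Scope ring_scope.

(* Given [mu1], [mu2] and [t21] in [[0, (mu2 - mu1)^+]], put
   [gain phi1 phi2 = <mu1, phi1> + <mu2, phi2> + <t21, phi1 - phi2>
                     - E1 phi1 - E2 phi2 - E1^*(mu1) - E2^*(mu2)].
   By Fenchel-Young, the required [t12] is any linear form with
   [gain phi1 phi2 <= <t12, phi1 - phi2>] that lies in [[0, (mu1 - mu2)^+]].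
   Applying [E1 <<_P E2] to [phi1] and [phi2], i.e. moving [z = (phi1 - phi2)^+]
   from [phi1] to [phi2], gives [gain phi1 phi2 <= p (phi1 - phi2)] for the
   sublinear [p phi = <(mu1 - mu2)^+, phi^+>], and convexity of [E1], [E2] makes
   the pairs [(phi1 - phi2, gain phi1 phi2)] a convex family.  The Mazur-Orlicz
   theorem (a consequence of the algebraic Hahn-Banach theorem) then yields a
   linear [t12 <= p] above the gain; domination by [p] makes [t12] continuous and
   places it in [[0, (mu1 - mu2)^+]]. *)

Section Sublinear.
Variables (R : realType) (V : lmodType R).

Definition sublinear (p : V -> R) :=
  (forall x y, p (x + y) <= p x + p y) /\ (forall c x, 0 < c -> p (c *: x) <= c * p x).

Definition linear_form (f : V -> R) := forall a x y, f (a *: x + y) = a * f x + f y.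

Section SublinearTheory.
Variable p : V -> R.
Hypothesis p_sub : sublinear p.

Lemma sublinear0 : p 0 = 0.
Proof.
apply/eqP; rewrite eq_le; apply/andP; split.
  have := p_sub.2 2^-1 0; rewrite scaler0 invr_gt0 ltr0n => /(_ isT); nra.
by have := p_sub.1 0 0; rewrite addr0; lra.
Qed.

Lemma sublinearZ c x : 0 <= c -> p (c *: x) = c * p x.
Proof.
rewrite le_eqVlt => /orP[/eqP<-|c0]; first by rewrite scale0r mul0r sublinear0.
apply/eqP; rewrite eq_le p_sub.2 //=.
have ci : 0 < c^-1 by rewrite invr_gt0.
have := p_sub.2 c^-1 (c *: x) ci; rewrite scalerA mulVf ?gt_eqF // scale1r.
by move=> h; rewrite -(ler_pM2l ci) mulrA mulVf ?gt_eqF // mul1r.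
Qed.

Lemma sublinear_oppr_le x : - p (- x) <= p x.
Proof. by have := p_sub.1 x (- x); rewrite subrr sublinear0; lra. Qed.

End SublinearTheory.

Section LinearForm.
Variable f : V -> R.
Hypothesis f_lin : linear_form f.

Lemma linear_form0 : f 0 = 0.
Proof. by have := f_lin 1 0 0; rewrite scale1r addr0 mul1r; lra. Qed.

Lemma linear_formD x y : f (x + y) = f x + f y.
Proof. by have := f_lin 1 x y; rewrite scale1r mul1r. Qed.

Lemma linear_formN x : f (- x) = - f x.
Proof. by have := f_lin (-1) x 0; rewrite addr0 scaleN1r linear_form0 addr0 mulN1r. Qed.

Lemma linear_formB x y : f (x - y) = f x - f y.
Proof. by rewrite linear_formD linear_formN. Qed.

Lemma linear_formZ c x : f (c *: x) = c * f x.
Proof. by have := f_lin c x 0; rewrite !addr0 linear_form0 addr0. Qed.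

End LinearForm.

Definition hypograph_convex (G : V -> R -> Prop) :=
  forall d1 a1 d2 a2 t, G d1 a1 -> G d2 a2 -> 0 < t < 1 ->
  exists d a, [/\ G d a, d = t *: d1 + (1 - t) *: d2 & t * a1 + (1 - t) * a2 <= a].

Definition mazur_orlicz_values (p : V -> R) (G : V -> R -> Prop) x : set R :=
  [set y | exists l d a, [/\ 0 <= l, G d a & y = p (x + l *: d) - l * a]].

(* A linear form below [mazur_orlicz_fun p G] lies below [p] and is at least
   [a] at [d] whenever [G d a]. *)
Definition mazur_orlicz_fun (p : V -> R) (G : V -> R -> Prop) x : R :=
  inf (mazur_orlicz_values p G x).

Section MazurOrliczFun.
Variables (p : V -> R) (G : V -> R -> Prop).
Hypotheses (p_sub : sublinear p) (G_le : forall d a, G d a -> a <= p d).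
Hypothesis G_neq0 : exists d a, G d a.
Hypothesis G_convex : hypograph_convex G.

Local Notation q := (mazur_orlicz_fun p G).
Local Notation Q := (mazur_orlicz_values p G).

Lemma mazur_orlicz_values_lbound x : lbound (Q x) (- p (- x)).
Proof.
move=> _ [l [d [a [l0 Gda ->]]]].
have : l * a <= p (l *: d) by rewrite sublinearZ // ler_wpM2l // G_le.
by have := p_sub.1 (x + l *: d) (- x); rewrite addrC addKr; lra.
Qed.

Lemma mazur_orlicz_fun_le x y : Q x y -> q x <= y.
Proof.
by move=> Qy; apply: ge_inf Qy; exists (- p (- x)); exact: mazur_orlicz_values_lbound.
Qed.

Lemma mazur_orlicz_fun_ge x z : (forall y, Q x y -> z <= y) -> z <= q x.
Proof.
have [d [a Gda]] := G_neq0; apply: lb_le_inf.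
by exists (p (x + 0 *: d) - 0 * a), 0, d, a.
Qed.

Lemma mazur_orlicz_fun_le_p x : q x <= p x.
Proof.
have [d [a Gda]] := G_neq0; apply: mazur_orlicz_fun_le.
by exists 0, d, a; rewrite scale0r addr0 mul0r subr0.
Qed.

Lemma mazur_orlicz_fun_opp_le d a : G d a -> q (- d) <= - a.
Proof.
move=> Gda; apply: mazur_orlicz_fun_le; exists 1, d, a.
by rewrite scale1r addNr sublinear0 // mul1r sub0r.
Qed.

(* Two shifts along [G] combine, by convexity of [G], into one shift along [G]. *)
Lemma mazur_orlicz_values_add x y u v : Q x u -> Q y v -> q (x + y) <= u + v.
Proof.
move=> [l1 [d1 [a1 [l1_ge0 G1 ->]]]] [l2 [d2 [a2 [l2_ge0 G2 ->]]]].
have [<-|l1_gt0] := eqVneq 0 l1.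
  rewrite scale0r addr0 mul0r subr0.
  apply: le_trans (mazur_orlicz_fun_le _) _; first by exists l2, d2, a2; split.
  by have := p_sub.1 x (y + l2 *: d2); rewrite addrA; lra.
have [<-|l2_gt0] := eqVneq 0 l2.
  rewrite scale0r addr0 mul0r subr0.
  apply: le_trans (mazur_orlicz_fun_le _) _; first by exists l1, d1, a1; split.
  by have := p_sub.1 (x + l1 *: d1) y; rewrite addrAC; lra.
have {}l1_gt0 : 0 < l1 by rewrite lt_neqAle l1_gt0.
have {}l2_gt0 : 0 < l2 by rewrite lt_neqAle l2_gt0.
have l_gt0 : 0 < l1 + l2 by rewrite addr_gt0.
have t01 : 0 < l1 / (l1 + l2) < 1 by rewrite divr_gt0 //= ltr_pdivrMr // mul1r ltrDl.
have e1 : (l1 + l2) * (l1 / (l1 + l2)) = l1 by rewrite mulrC divfK ?gt_eqF.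
have e2 : (l1 + l2) * (1 - l1 / (l1 + l2)) = l2 by rewrite mulrBr mulr1 e1 addrAC subrr add0r.
move: (l1 / (l1 + l2)) t01 e1 e2 => t t01 e1 e2.
have [d [a [Gda dE le_a]]] := G_convex G1 G2 t01.
apply: le_trans (mazur_orlicz_fun_le _) _.
  by exists (l1 + l2), d, a; split => //; exact: ltW.
rewrite dE scalerDr !scalerA e1 e2 addrACA.
have := p_sub.1 (x + l1 *: d1) (y + l2 *: d2).
have := ler_wpM2l (ltW l_gt0) le_a; rewrite mulrDr !mulrA e1 e2.
lra.
Qed.

Lemma mazur_orlicz_fun_sublinear : sublinear q.
Proof.
split=> [x y|c x c0].
  suff : q (x + y) - q y <= q x by lra.
  apply: mazur_orlicz_fun_ge => u Qu; suff : q (x + y) - u <= q y by lra.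
  apply: mazur_orlicz_fun_ge => v Qv; have := mazur_orlicz_values_add Qu Qv; lra.
rewrite mulrC -ler_pdivrMr //; apply: mazur_orlicz_fun_ge => _ [l [d [a [l0 Gda ->]]]].
rewrite ler_pdivrMr //; apply: le_trans (mazur_orlicz_fun_le _) _.
  by exists (c * l), d, a; split => //; exact: mulr_ge0 (ltW c0) l0.
by rewrite -scalerA -scalerDr sublinearZ ?(ltW c0) //; lra.
Qed.

End MazurOrliczFun.

Lemma minimal_sublinear_linear (q : V -> R) : sublinear q ->
  (forall r, sublinear r -> (forall x, r x <= q x) -> forall x, q x <= r x) ->
  linear_form q.
Proof.
move=> q_sub q_min.
(* minimality makes [q] agree with the Mazur-Orlicz functional of the pair [(y, q y)] *)
have q_oppr_le y : q (- y) <= - q y.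
  pose G d a := d = y /\ a = q y.
  have G_convex : hypograph_convex G.
    move=> d1 a1 d2 a2 t [-> ->] [-> ->] _; exists y, (q y); split => //.
      by rewrite -scalerDl addrC subrK scale1r.
    by rewrite -mulrDl addrC subrK mul1r.
  have G_le d a : G d a -> a <= q d by move=> [-> ->].
  have G_neq0 : exists d a, G d a by exists y, (q y).
  apply: le_trans _ (mazur_orlicz_fun_opp_le q_sub G_le (conj erefl erefl)).
  apply: q_min (mazur_orlicz_fun_sublinear q_sub G_le G_neq0 G_convex) _ _.
  exact: mazur_orlicz_fun_le_p.
have qN y : q (- y) = - q y.
  by apply/le_anti; rewrite q_oppr_le /=; have := sublinear_oppr_le q_sub y; lra.
have qD x y : q (x + y) = q x + q y.
  apply/le_anti; rewrite q_sub.1 /=.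
  by have := q_sub.1 (x + y) (- y); rewrite addrK qN; lra.
move=> a x y; rewrite qD; congr (_ + _).
have [a_ge0|a_lt0] := leP 0 a; first exact: sublinearZ.
have -> : a *: x = (- a) *: (- x) by rewrite scaleNr scalerN opprK.
by rewrite sublinearZ ?qN ?mulrNN // oppr_ge0 ltW.
Qed.

Lemma chain_inf_sublinear (p : V -> R) (A : set (V -> R)) : A !=set0 ->
  (forall f, A f -> sublinear f /\ forall x, f x <= p x) ->
  (forall f g, A f -> A g -> (forall x, f x <= g x) \/ (forall x, g x <= f x)) ->
  sublinear (fun x => inf [set f x | f in A]) /\
  forall f, A f -> forall x, inf [set f x | f in A] <= f x.
Proof.
move=> [f0 Af0] A_sub A_chain.
pose m x := inf [set f x | f in A].
have m_le x f : A f -> m x <= f x.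
  move=> Af; apply: ge_inf; last by exists f.
  exists (- p (- x)) => _ [g Ag <-]; have [g_sub g_le] := A_sub g Ag.
  by have := sublinear_oppr_le g_sub x; have := g_le (- x); lra.
have m_ge x z : (forall f, A f -> z <= f x) -> z <= m x.
  by move=> z_le; apply: lb_le_inf; [exists (f0 x), f0 | move=> _ [f Af <-]; exact: z_le].
split; last by move=> f Af x; exact: m_le.
split=> [x y|c x c0].
  suff : m (x + y) - m y <= m x by lra.
  apply: (m_ge) => f Af; suff : m (x + y) - f x <= m y by lra.
  apply: (m_ge) => g Ag.
  have [fg|gf] := A_chain f g Af Ag.
    by have := m_le (x + y) f Af; have := (A_sub f Af).1.1 x y; have := fg y; lra.
  by have := m_le (x + y) g Ag; have := (A_sub g Ag).1.1 x y; have := gf x; lra.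
rewrite mulrC -ler_pdivrMr //; apply: (m_ge) => f Af; rewrite ler_pdivrMr // mulrC.
exact: le_trans (m_le _ _ Af) ((A_sub f Af).1.2 c x c0).
Qed.

Theorem hahn_banach (p : V -> R) : sublinear p ->
  exists f, linear_form f /\ forall x, f x <= p x.
Proof.
move=> p_sub.
pose T := {r : V -> R | sublinear r /\ forall x, r x <= p x}.
pose below : rel T := fun r s => `[< forall x, sval s x <= sval r x >].
have [q q_min] : exists q, premaximal below q.
  apply: (ZL_preorder (exist _ p (conj p_sub (fun x => lexx _)))).
  - by move=> r; apply/asboolP => x.
  - move=> r s t /asboolP rs /asboolP st; apply/asboolP => x; exact: le_trans (st x) (rs x).
  move=> A A_chain.
  pose B := [set f | f = p \/ exists2 r, A r & f = sval r].
  have B_sub f : B f -> sublinear f /\ forall x, f x <= p x.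
    by move=> [->|[r _ ->]]; [split | exact: (svalP r)].
  have B_chain f g : B f -> B g -> (forall x, f x <= g x) \/ (forall x, g x <= f x).
    move=> [->|[r Ar ->]]; first by move=> /B_sub[_ gp]; right.
    move=> [->|[s As ->]]; first by left => x; exact: (svalP r).2.
    by have [/asboolP|/asboolP] := A_chain r s Ar As; [right|left].
  have [m_sub m_le] := chain_inf_sublinear (ex_intro _ p (or_introl erefl)) B_sub B_chain.
  have m_le_p x : inf [set f x | f in B] <= p x by apply: m_le; left.
  exists (exist _ (fun x => inf [set f x | f in B]) (conj m_sub m_le_p)) => r Ar.
  apply/asboolP => x /=.
  by apply: m_le; right; exists r.
exists (sval q); split; last exact: (svalP q).2.
apply: minimal_sublinear_linear (svalP q).1 _ => r r_sub r_le.
have r_le_p x : r x <= p x := le_trans (r_le x) ((svalP q).2 x).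
suff /q_min/asboolP : below q (exist _ r (conj r_sub r_le_p)) by [].
exact/asboolP.
Qed.

Theorem mazur_orlicz (p : V -> R) (G : V -> R -> Prop) :
  sublinear p -> (forall d a, G d a -> a <= p d) -> (exists d a, G d a) ->
  hypograph_convex G ->
  exists f, [/\ linear_form f, forall x, f x <= p x & forall d a, G d a -> a <= f d].
Proof.
move=> p_sub G_le G_neq0 G_convex.
have q_sub := mazur_orlicz_fun_sublinear p_sub G_le G_neq0 G_convex.
have [f [f_lin f_le]] := hahn_banach q_sub.
exists f; split=> // [x|d a Gda].
  exact: le_trans (f_le x) (mazur_orlicz_fun_le_p p_sub G_le G_neq0 x).
have := le_trans (f_le (- d)) (mazur_orlicz_fun_opp_le p_sub G_le Gda).
by rewrite (linear_formN f_lin); lra.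
Qed.

End Sublinear.

Section BanachLatticeTheory.
Variables (R : realType) (V : completeNormedModType R).
Variables (le : V -> V -> Prop) (meet join : V -> V -> V).
Hypothesis HX : is_banach_lattice le meet join.

Lemma lat_subr_ge0 x y : le x y -> le 0 (y - x).
Proof. by move=> /(bl_add HX (- x)); rewrite subrr. Qed.

Lemma lat_addl w x y : le x y -> le (w + x) (w + y).
Proof. by move=> /(bl_add HX w); rewrite ![_ + w]addrC. Qed.

Lemma lat_oppr_le0 x : le 0 x -> le (- x) 0.
Proof. by move=> /(bl_add HX (- x)); rewrite add0r subrr. Qed.

Lemma lat_join_idPl x y : le y x -> join x y = x.
Proof.
move=> yx; apply: (bl_antisym HX); last exact: (bl_join_l HX).
by apply: (bl_join_lub HX) => //; exact: (bl_refl HX).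
Qed.

Lemma lat_join_idPr x y : le x y -> join x y = y.
Proof.
move=> xy; apply: (bl_antisym HX); last exact: (bl_join_r HX).
by apply: (bl_join_lub HX) => //; exact: (bl_refl HX).
Qed.

Lemma lat_meet_idPr x y : le y x -> meet x y = y.
Proof.
move=> yx; apply: (bl_antisym HX); first exact: (bl_meet_r HX).
by apply: (bl_meet_glb HX) => //; exact: (bl_refl HX).
Qed.

Lemma lat_joinDr w x y : join (x + w) (y + w) = join x y + w.
Proof.
apply: (bl_antisym HX).
  apply: (bl_join_lub HX); apply: (bl_add HX); first exact: (bl_join_l HX).
  exact: (bl_join_r HX).
suff : le (join x y) (join (x + w) (y + w) - w) by move=> /(bl_add HX w); rewrite subrK.
apply: (bl_join_lub HX).
  by have := bl_add HX (- w) (bl_join_l HX (x + w) (y + w)); rewrite addrK.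
by have := bl_add HX (- w) (bl_join_r HX (x + w) (y + w)); rewrite addrK.
Qed.

Lemma lat_joinE x y : join x y = y + join (x - y) 0.
Proof. by rewrite addrC -lat_joinDr subrK add0r. Qed.

Lemma lat_meet_join x y : meet x y = x + y - join x y.
Proof.
apply: (bl_antisym HX).
  suff : le (join x y) (x + y - meet x y).
    move=> /(bl_add HX (meet x y - join x y)).
    by rewrite [join x y + _]addrC subrK addrA subrK.
  apply: (bl_join_lub HX).
    have := bl_add HX (x - meet x y) (bl_meet_r HX x y).
    by rewrite [meet x y + _]addrC subrK addrA (addrC y x).
  have := bl_add HX (y - meet x y) (bl_meet_l HX x y).
  by rewrite [meet x y + _]addrC subrK addrA.
apply: (bl_meet_glb HX).
  by have := lat_addl (x - join x y) (bl_join_r HX x y); rewrite subrK addrAC.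
by have := lat_addl (y - join x y) (bl_join_l HX x y); rewrite subrK addrAC (addrC y x).
Qed.

Lemma lat_meetE x y : meet x y = x - join (x - y) 0.
Proof. by rewrite lat_meet_join lat_joinE opprD addrA addrK. Qed.

Lemma lat_join0D_le x y : le (join (x + y) 0) (join x 0 + join y 0).
Proof.
apply: (bl_join_lub HX).
  exact: (bl_trans HX) (bl_add HX y (bl_join_l HX x 0)) (lat_addl _ (bl_join_l HX y 0)).
have := lat_addl (join x 0) (bl_join_r HX y 0); rewrite addr0.
exact: (bl_trans HX) (bl_join_r HX x 0).
Qed.

Lemma lat_join0Z c x : 0 < c -> join (c *: x) 0 = c *: join x 0.
Proof.
move=> c_gt0; have c_ge0 := ltW c_gt0.
have cV_ge0 : 0 <= c^-1 by rewrite invr_ge0.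
apply: (bl_antisym HX).
  apply: (bl_join_lub HX); first exact/(bl_scale HX c_ge0)/(bl_join_l HX).
  by have := bl_scale HX c_ge0 (bl_join_r HX x 0); rewrite scaler0.
suff : le (join x 0) (c^-1 *: join (c *: x) 0).
  by move=> /(bl_scale HX c_ge0); rewrite scalerA mulfV ?gt_eqF // scale1r.
apply: (bl_join_lub HX).
  have := bl_scale HX cV_ge0 (bl_join_l HX (c *: x) 0).
  by rewrite scalerA mulVf ?gt_eqF // scale1r.
by have := bl_scale HX cV_ge0 (bl_join_r HX (c *: x) 0); rewrite scaler0.
Qed.

Lemma lat_norm_join0_le x : `|join x 0| <= `|x|.
Proof.
apply: (bl_norm HX); rewrite /lat_abs.
have x0_ge0 : le 0 (join x 0) by exact: (bl_join_r HX).
rewrite (lat_join_idPl x0_ge0) (lat_meet_idPr x0_ge0) oppr0 addr0.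
by have := lat_addl (join x 0) (lat_subr_ge0 (bl_meet_r HX x 0)); rewrite sub0r addr0.
Qed.

End BanachLatticeTheory.

Section DualFunctionals.
Variables (R : realType) (V : completeNormedModType R).

Lemma is_dual0 : is_dual (fun _ : V => 0 : R).
Proof. by split=> [a x y|x]; [rewrite mulr0 addr0 | exact: cvg_cst]. Qed.

Lemma is_dual_comb (f g : V -> R) (a b : R) :
  is_dual f -> is_dual g -> is_dual (fun x => a * f x + b * g x).
Proof.
move=> [f_lin f_cont] [g_lin g_cont]; split=> [c x y|x].
  by rewrite f_lin g_lin; ring.
by apply: cvgD; apply: cvgM; [exact: cvg_cst | exact: f_cont | exact: cvg_cst | exact: g_cont].
Qed.

Definition linear_of_form (f : V -> R) (f_lin : linear_form f) : {linear V -> R^o} :=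
  HB.pack f (GRing.isLinear.Build R V R^o *:%R f f_lin).

Lemma is_dual_bounded (mu : V -> R) : is_dual mu ->
  exists2 M, 0 < M & forall x, `|mu x| <= M * `|x|.
Proof.
move=> [mu_lin mu_cont].
have := @continuous_linear_bounded R V R^o 0 (linear_of_form mu_lin) (mu_cont 0).
by move=> /linear_boundedP /pinfty_ex_gt0.
Qed.

Lemma bounded_is_dual (f : V -> R) (M : R) :
  linear_form f -> (forall x, `|f x| <= M * `|x|) -> is_dual f.
Proof.
move=> f_lin f_le; split=> //.
apply: (@bounded_linear_continuous R V R^o (linear_of_form f_lin)).
apply/bounded_funP => r; exists (`|M| * r) => x xr.
apply: le_trans (f_le x) _; apply: le_trans (ler_wpM2r (normr_ge0 x) (ler_norm M)) _.
exact: ler_wpM2l.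
Qed.

Lemma dual_pos_part_opp (le : V -> V -> Prop) (p nu : V -> R) :
  is_dual nu -> dual_pos_part le p nu ->
  dual_pos_part le (fun x => p x - nu x) (fun x => - nu x).
Proof.
move=> nu_dual [p_dual [nu_le_p [p_ge0 p_least]]].
split.
  by have := is_dual_comb 1 (-1) p_dual nu_dual; under eq_fun do rewrite mul1r mulN1r.
split=> [phi phi_ge0|]; first by have := p_ge0 phi phi_ge0; lra.
split=> [phi phi_ge0|q q_dual q_ge q_ge0 phi phi_ge0].
  by have := nu_le_p phi phi_ge0; lra.
have qnu_dual : is_dual (fun x => q x + nu x).
  by have := is_dual_comb 1 1 q_dual nu_dual; under eq_fun do rewrite !mul1r.
have nu_le_qnu : dual_le le nu (fun x => q x + nu x).
  by move=> psi psi_ge0; have := q_ge0 psi psi_ge0; lra.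
have qnu_ge0 : dual_le le (fun _ => 0) (fun x => q x + nu x).
  by move=> psi psi_ge0; have := q_ge psi psi_ge0; lra.
by have := p_least _ qnu_dual nu_le_qnu qnu_ge0 phi phi_ge0; lra.
Qed.

End DualFunctionals.

Lemma dominated_dual_in_interval (R : realType) (V : completeNormedModType R)
    (le : V -> V -> Prop) (meet join : V -> V -> V) (f g : V -> R) :
  is_banach_lattice le meet join -> linear_form f -> is_dual g ->
  (forall x, f x <= g (join x 0)) -> dual_in_interval le f (fun _ => 0) g.
Proof.
move=> HX f_lin g_dual f_le.
have [M M_gt0 g_le] := is_dual_bounded g_dual.
have f_bound x : f x <= M * `|x|.
  apply: le_trans (f_le x) (le_trans (ler_norm _) (le_trans (g_le _) _)).
  exact/ler_wpM2l/lat_norm_join0_le/HX/ltW.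
split; last split=> phi phi_ge0.
- apply: (bounded_is_dual (M := M) f_lin) => x; rewrite ler_norml f_bound andbT.
  by have := f_bound (- x); rewrite normrN (linear_formN f_lin); lra.
- have := f_le (- phi); rewrite (lat_join_idPr HX (lat_oppr_le0 HX phi_ge0)).
  by rewrite (linear_formN f_lin) (linear_form0 g_dual.1); lra.
- by have := f_le phi; rewrite (lat_join_idPl HX phi_ge0).
Qed.

Section Conjugate.
Variables (R : realType) (V : completeNormedModType R).
Local Open Scope ereal_scope.

Lemma proper_fun_EFin (E : V -> \bar R) : proper_fun E -> exists phi e, E phi = e%:E.
Proof.
move=> [E_neqNy [phi E_phi]]; exists phi; move: (E_neqNy phi) E_phi.
by case: (E phi) => // e; exists e.
Qed.

Lemma convex_fun_EFin_le (E : V -> \bar R) x y (e f t : R) :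
  proper_fun E -> convex_fun E -> E x = e%:E -> E y = f%:E -> (0 < t < 1)%R ->
  exists g, E (t *: x + (1 - t) *: y)%R = g%:E /\ (g <= t * e + (1 - t) * f)%R.
Proof.
move=> [E_neqNy _] E_convex Ex Ey t01; have := E_convex x y t t01.
rewrite Ex Ey -!EFinM -EFinD; move: (E_neqNy (t *: x + (1 - t) *: y)%R).
by case: (E _) => // g _; rewrite lee_fin; exists g.
Qed.

Lemma conjugate_ge (E : V -> \bar R) (mu : V -> R) phi :
  (mu phi)%:E - E phi <= conjugate E mu.
Proof. by apply: ereal_sup_ubound; exists phi. Qed.

Lemma conjugate_proper_neqNy (E : V -> \bar R) (mu : V -> R) :
  proper_fun E -> conjugate E mu <> -oo.
Proof.
move=> [E_neqNy [phi E_phi]] conj_Ny; have := conjugate_ge E mu phi.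
by rewrite conj_Ny; move: (E_neqNy phi) E_phi; case: (E phi).
Qed.

Lemma conjugate_add_le (E1 E2 : V -> \bar R) (nu1 nu2 : V -> R) (C : R) :
  proper_fun E1 -> proper_fun E2 ->
  (forall x y e1 e2, E1 x = e1%:E -> E2 y = e2%:E -> nu1 x - e1 + (nu2 y - e2) <= C)%R ->
  conjugate E1 nu1 + conjugate E2 nu2 <= C%:E.
Proof.
move=> E1_proper E2_proper le_C.
have le_C_conj2 x e : E1 x = e%:E -> (nu1 x - e)%:E + conjugate E2 nu2 <= C%:E.
  move=> E1_x; rewrite -leeBrDl //; apply: ge_ereal_sup => _ [y _ <-].
  move: (E2_proper.1 y) (le_C x y e); case: (E2 y) => [f _ /(_ _ E1_x erefl)||] //.
    by rewrite -EFinB -EFinB lee_fin; lra.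
  by rewrite leNye.
have conj2_fin : conjugate E2 nu2 \is a fin_num.
  rewrite fin_numE; apply/andP; split; first exact/eqP/conjugate_proper_neqNy.
  have [x0 [e0 E1_x0]] := proper_fun_EFin E1_proper.
  by apply/eqP => conj2_y; have := le_C_conj2 x0 e0 E1_x0; rewrite conj2_y.
rewrite -leeBrDr //; apply: ge_ereal_sup => _ [x _ <-].
move: (E1_proper.1 x) (le_C_conj2 x); case: (E1 x) => [e _ /(_ _ erefl)||] //.
  by rewrite leeBrDr // EFinB.
by rewrite leNye.
Qed.

End Conjugate.

Section ConjugateExchange.
Variables (R : realType) (V : completeNormedModType R).
Variables (le : V -> V -> Prop) (meet join : V -> V -> V).
Hypothesis HX : is_banach_lattice le meet join.
Variables (E1 E2 : V -> \bar R).
Hypotheses (E1_proper : proper_fun E1) (E1_convex : convex_fun E1).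
Hypotheses (E2_proper : proper_fun E2) (E2_convex : convex_fun E2).
Hypothesis E12 : lessP meet join E1 E2.
Variables (mu1 mu2 t21 p12 : V -> R).
Hypotheses (mu1_lin : linear_form mu1) (mu2_lin : linear_form mu2).
Hypotheses (t21_lin : linear_form t21) (p12_dual : is_dual p12).
Hypothesis p12_ge0 : dual_le le (fun _ => 0) p12.
Hypothesis t21_ge0 : dual_le le (fun _ => 0) t21.
Hypothesis t21_le : dual_le le t21 (fun x => p12 x + (mu2 x - mu1 x)).
Hypothesis conj_fin : (conjugate E1 mu1 + conjugate E2 mu2 \is a fin_num)%E.

Let c1 := fine (conjugate E1 mu1).
Let c2 := fine (conjugate E2 mu2).

Let conj1 : conjugate E1 mu1 = c1%:E.
Proof. by rewrite fineK //; move: conj_fin; rewrite fin_numD => /andP[]. Qed.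

Let conj2 : conjugate E2 mu2 = c2%:E.
Proof. by rewrite fineK //; move: conj_fin; rewrite fin_numD => /andP[]. Qed.

Let gain phi1 phi2 e1 e2 :=
  mu1 phi1 + mu2 phi2 + t21 (phi1 - phi2) - e1 - e2 - (c1 + c2).

Let G d a := exists phi1 phi2 e1 e2,
  [/\ E1 phi1 = e1%:E, E2 phi2 = e2%:E, d = phi1 - phi2 & a = gain phi1 phi2 e1 e2].

Let p x := p12 (join x 0).

Lemma exchange_sublinear : sublinear p.
Proof.
have p12_lin := p12_dual.1.
split=> [x y|c x c_gt0]; last by rewrite /p (lat_join0Z HX _ c_gt0) (linear_formZ p12_lin).
have := p12_ge0 (lat_subr_ge0 HX (lat_join0D_le HX x y)).
by rewrite /p (linear_formB p12_lin) (linear_formD p12_lin); lra.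
Qed.

(* Submodularity moves [z = (phi1 - phi2)^+] from [phi1] to [phi2]; the
   Fenchel-Young inequalities at [phi1 - z] and [phi2 + z] then bound the gain. *)
Lemma exchange_gain_le d a : G d a -> a <= p d.
Proof.
move=> [phi1 [phi2 [e1 [e2 [E1_phi1 E2_phi2 -> ->]]]]].
set z := join (phi1 - phi2) 0.
have := E12 phi1 phi2; rewrite (lat_meetE HX phi1) (lat_joinE HX phi1) -/z E1_phi1 E2_phi2.
have := conjugate_ge E1 mu1 (phi1 - z); have := conjugate_ge E2 mu2 (phi2 + z).
rewrite conj1 conj2.
move: (E1_proper.1 (phi1 - z)) (E2_proper.1 (phi2 + z)).
case: (E1 (phi1 - z)) => [f1||] //; case: (E2 (phi2 + z)) => [f2||] // _ _.
rewrite -!EFinD !lee_fin => FY2 FY1 sub.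
have := t21_ge0 (lat_subr_ge0 HX (bl_join_l HX (phi1 - phi2) 0)).
have := t21_le (bl_join_r HX (phi1 - phi2) 0).
rewrite /gain /p -/z !(linear_formB t21_lin) (linear_formB mu1_lin) (linear_formD mu2_lin)
  in FY1 FY2 *.
lra.
Qed.

Lemma exchange_neq0 : exists d a, G d a.
Proof.
have [phi1 [e1 E1_phi1]] := proper_fun_EFin E1_proper.
have [phi2 [e2 E2_phi2]] := proper_fun_EFin E2_proper.
by exists (phi1 - phi2), (gain phi1 phi2 e1 e2), phi1, phi2, e1, e2.
Qed.

Lemma exchange_convex : hypograph_convex G.
Proof.
move=> d1 a1 d2 a2 t [phi1 [phi2 [e1 [e2 [E1_phi1 E2_phi2 -> ->]]]]].
move=> [psi1 [psi2 [f1 [f2 [E1_psi1 E2_psi2 -> ->]]]]] t01.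
have [g1 [E1_chi1 g1_le]] := convex_fun_EFin_le E1_proper E1_convex E1_phi1 E1_psi1 t01.
have [g2 [E2_chi2 g2_le]] := convex_fun_EFin_le E2_proper E2_convex E2_phi2 E2_psi2 t01.
set chi1 := t *: phi1 + (1 - t) *: psi1 in E1_chi1 *.
set chi2 := t *: phi2 + (1 - t) *: psi2 in E2_chi2 *.
exists (chi1 - chi2), (gain chi1 chi2 g1 g2); split.
- by exists chi1, chi2, g1, g2.
- by rewrite /chi1 /chi2 !scalerBr opprD addrACA.
rewrite /gain /chi1 /chi2.
rewrite !(linear_formB t21_lin) !(linear_formD t21_lin) !(linear_formZ t21_lin).
rewrite !(linear_formD mu1_lin) !(linear_formZ mu1_lin).
rewrite !(linear_formD mu2_lin) !(linear_formZ mu2_lin).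
lra.
Qed.

Lemma conjugate_exchange : exists t12, dual_in_interval le t12 (fun _ => 0) p12 /\
  (conjugate E1 (fun x => mu1 x + t21 x - t12 x)%R +
     conjugate E2 (fun x => mu2 x - t21 x + t12 x)%R
    <= conjugate E1 mu1 + conjugate E2 mu2)%E.
Proof.
have [s [s_lin s_le s_ge]] :=
  mazur_orlicz exchange_sublinear exchange_gain_le exchange_neq0 exchange_convex.
exists s; split; first exact: dominated_dual_in_interval HX s_lin p12_dual s_le.
rewrite conj1 conj2 -EFinD; apply: conjugate_add_le => // y1 y2 f1 f2 E1_y1 E2_y2.
have : G (y1 - y2) (gain y1 y2 f1 f2) by exists y1, y2, f1, f2.
move=> /s_ge; rewrite /gain (linear_formB s_lin) (linear_formB t21_lin); lra.
Qed.

End ConjugateExchange.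

Lemma lessP_conjugate_lessQ (R : realType) (V : completeNormedModType R)
    (le : V -> V -> Prop) (meet join : V -> V -> V) (E1 E2 : V -> \bar R) :
  is_banach_lattice le meet join ->
  proper_fun E1 -> convex_fun E1 -> proper_fun E2 -> convex_fun E2 ->
  lessP meet join E1 E2 -> lessQ le (conjugate E2) (conjugate E1).
Proof.
move=> HX E1_proper E1_convex E2_proper E2_convex E12.
move=> mu1 mu2 mu1_dual mu2_dual p21 p21_pos t21 [t21_dual [t21_ge0 t21_le]].
have mu21_dual : is_dual (fun x => mu2 x - mu1 x).
  by have := is_dual_comb 1 (-1) mu2_dual mu1_dual; under eq_fun do rewrite mul1r mulN1r.
have := dual_pos_part_opp mu21_dual p21_pos.
have -> : (fun x => - (mu2 x - mu1 x)) = (fun x => mu1 x - mu2 x).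
  by apply/funext => x; rewrite opprB.
set p12 := fun x => p21 x - (mu2 x - mu1 x) => p12_pos; exists p12.
have [conj_fin|conj_nfin] := boolP (conjugate E1 mu1 + conjugate E2 mu2 \is a fin_num)%E.
  have t21_le12 : dual_le le t21 (fun x => p12 x + (mu2 x - mu1 x)).
    by move=> phi phi_ge0; rewrite /p12 subrK; exact: t21_le.
  have [t12 [t12_in le_conj]] := conjugate_exchange HX E1_proper E1_convex E2_proper E2_convex
    E12 mu1_dual.1 mu2_dual.1 t21_dual.1 p12_pos.1 p12_pos.2.2.1 t21_ge0 t21_le12 conj_fin.
  by exists t12.
exists (fun _ => 0); split => //; split.
  by split; [exact: is_dual0 | split=> [phi _|]; [exact: lexx | exact: p12_pos.2.2.1]].
move: conj_nfin; rewrite fin_numE adde_eq_ninfty.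
rewrite (negbTE (introN eqP (conjugate_proper_neqNy (mu := mu1) E1_proper))).
rewrite (negbTE (introN eqP (conjugate_proper_neqNy (mu := mu2) E2_proper))) /= negbK.
by move=> /eqP ->; exact: leey.
Qed.

Theorem theorem2p49 (R : realType) (V : completeNormedModType R)
    (le : V -> V -> Prop) (meet join : V -> V -> V)
    (HX : is_banach_lattice le meet join) :
  (forall E1 E2 : V -> \bar R,
      proper_fun E1 -> convex_fun E1 -> proper_fun E2 -> convex_fun E2 ->
      lessP meet join E1 E2 ->
      lessQ le (conjugate E2) (conjugate E1)) /\
  (forall E : V -> \bar R,
      proper_fun E -> convex_fun E -> submodular meet join E ->
      substitutable le (conjugate E)).
Proof.
split=> [E1 E2|E E_proper E_convex E_sub]; first exact: lessP_conjugate_lessQ.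
exact: (lessP_conjugate_lessQ HX E_proper E_convex E_proper E_convex E_sub).
Qed.
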